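(* Let $\mathcal F=(A_1,\dots,A_m)$ and $\mathcal F'=(A'_1,\dots,A'_m)$ be objects of $\mathcal{S}h_n(\Lambda_m,\mathbbm{k})$ described as below. Then $$\mathrm{Ext}^0(\mathcal F,\mathcal F')\cong\{(u_1,u_2)\in(\mathrm{End}\,V)^2: A'_ku_1=u_2A_k\text{ for all even }k,\ A'_ku_2=u_1A_k\text{ for all odd }k\},$$ where $(u_1,u_2)$ corresponds to the morphism given on the diagram data by $u_0=u_1$ on the top $V$, $u_k=u_1$ on the $k$-th lower arc for $k$ odd, $u_k=u_2$ for $k$ even, and $v=\begin{pmatrix}u_2&0\\0&u_1\end{pmatrix}$ on $V^2$.
   Context: $\mathbbm{k}$ a field, $\dim V=n$; $P_0=1$, $P_1(a_1)=a_1$, $P_m=P_{m-1}(a_1,\dots,a_{m-1})a_m+P_{m-2}(a_1,\dots,a_{m-2})$. $\Lambda_m$ is the rainbow closure of $\sigma_1^m\in B_2$ with binary Maslov potential; $\mathcal{S}h_n(\Lambda_m,\mathbbm{k})$ is the category of constructible (w.r.t. the front) complexes of sheaves of $\mathbbm{k}$-modules on $\mathbb R^2$ with microsupport in $\Lambda_m$, acyclic for $z\ll 0$, of microlocal rank $n$, modulo acyclics. A tuple $(A_1,\dots,A_m)\in(\mathrm{End}\,V)^m$ with $P_m(A_1,\dots,A_m)$ invertible denotes the sheaf with diagram data: top space $V$ (inside outer cusps), middle space $V^2$ (inside inner cusps), $\psi=(0\ \ 1):V^2\to V$, and maps $\phi_1,\dots,\phi_{m+1}:V\to V^2$ from the $m+1$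 lower braid arcs (each with stalk $V$) such that $\begin{pmatrix}0&1\\1&A_1\end{pmatrix}\cdots\begin{pmatrix}0&1\\1&A_k\end{pmatrix}=\phi_k\oplus\phi_{k+1}$ for $1\le k\le m$. A morphism of such sheaves is a family of maps $u_0$ (top $V$), $v$ (on $V^2$), $u_1,\dots,u_{m+1}$ (on the arcs) commuting with all $\psi$, $\phi_i$. *)

From HB Require Import structures.
From mathcomp Require Import all_boot all_order all_algebra.
Set Implicit Arguments. Unset Strict Implicit. Unset Printing Implicit Defensive.
Import GRing.Theory.
Local Open Scope ring_scope.

(* V = 'cV[F]_n ; End V = 'M[F]_n ; V^2 = 'cV[F]_(n+n).
   Linear maps act on column vectors by left multiplication: f o g = f *m g. *)

Section Defs.
Variables (F : fieldType) (n : nat).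

(* The (noncommutative) continuant P_m(A_1,...,A_m); A is indexed from 1. *)
Fixpoint cont (A : nat -> 'M[F]_n) (m : nat) : 'M[F]_n :=
  match m with
  | 0 => 1%:M
  | 1 => A 1%N
  | S ((S k) as k1) => cont A k1 *m A m + cont A k
  end.

Definition blk (a : 'M[F]_n) : 'M[F]_(n + n) := block_mx 0 1%:M 1%:M a.

Fixpoint prefix (A : nat -> 'M[F]_n) (k : nat) : 'M[F]_(n + n) :=
  match k with
  | 0 => 1%:M
  | S j => prefix A j *m blk (A k)
  end.

Definition psi : 'M[F]_(n, n + n) := row_mx 0 1%:M.

(* phi_1..phi_{m+1} : V -> V^2 are the diagram data of the sheaf (A_1..A_m):
   (0 1;1 A_1)...(0 1;1 A_k) = phi_k (+) phi_{k+1} for 1 <= k <= m. *)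
Definition diag_data (m : nat) (A : nat -> 'M[F]_n)
    (phi : nat -> 'M[F]_(n + n, n)) : Prop :=
  forall k, (1 <= k <= m)%N -> prefix A k = row_mx (phi k) (phi k.+1).

(* A morphism of diagram data: u0 on the top V, v on V^2, and u on the m+1
   lower arcs (ordinal i : 'I_m.+1 stands for the arc number i+1). *)
Definition is_mor (m : nat) (phi phi' : nat -> 'M[F]_(n + n, n))
    (u0 : 'M[F]_n) (v : 'M[F]_(n + n)) (u : {ffun 'I_m.+1 -> 'M[F]_n}) : Prop :=
  u0 *m psi = psi *m v /\
  forall i : 'I_m.+1, v *m phi i.+1 = phi' i.+1 *m u i.

Definition sol (m : nat) (A A' : nat -> 'M[F]_n) (u1 u2 : 'M[F]_n) : Prop :=
  forall k, (1 <= k <= m)%N ->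
    if odd k then A' k *m u2 = u1 *m A k else A' k *m u1 = u2 *m A k.

Definition mor_of (m : nat) (u1 u2 : 'M[F]_n)
  : 'M[F]_n * 'M[F]_(n + n) * {ffun 'I_m.+1 -> 'M[F]_n} :=
  (u1, block_mx u2 0 0 u1, [ffun i : 'I_m.+1 => if odd i.+1 then u1 else u2]).

End Defs.

(* Along the braid the diagram data obey phi_(k+2) = phi_k + phi_(k+1) A_(k+1), and
   [phi_k phi_(k+1)] is the invertible product prefix A k.  If v already commutes with arcs k
   and k+1, it commutes with arc k+2 exactly when the map on arc k+2 equals the one on arc k and
   intertwines A_(k+1) with A'_(k+1), since the defect is prefix A' k applied to these two
   differences.  Compatibility with psi and the first arc forces v = diag(u_2, u_1) with
   u_1 = u_0, so by induction along the braid the arc maps alternate between u_1 and u_2, and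
   the intertwining relations are exactly the defining equations of the set. *)
From Pilot Require Import Defs.
From HB Require Import structures.
From mathcomp Require Import all_boot all_order all_algebra zify.
Import GRing.Theory.
Local Open Scope ring_scope.
Set Implicit Arguments. Unset Strict Implicit.

Section LinearAlgebra.
Variables (F : fieldType) (n : nat).

Lemma unitmx_mulmx_eq0 p (P : 'M[F]_p) q (X : 'M[F]_(p, q)) :
  P \in unitmx -> P *m X = 0 -> X = 0.
Proof. by move=> Pu PX0; rewrite -(mulKmx Pu X) PX0 mulmx0. Qed.

Lemma blk_unitmx (a : 'M[F]_n) : blk a \in unitmx.
Proof.
apply: (proj2 (@mulmx1_unit _ _ (block_mx (- a) 1%:M 1%:M 0) _ _)).
rewrite /blk mulmx_block !mulmx0 !mulmx1 !mul0mx !mul1mx !addr0 add0r addNr.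
by rewrite -scalar_mx_block.
Qed.

Lemma prefix_unitmx (A : nat -> 'M[F]_n) k : Defs.prefix A k \in unitmx.
Proof.
elim: k => [|k IHk]; first exact: unitmx1.
by rewrite /= unitmx_mul IHk blk_unitmx.
Qed.

Lemma row_mx_mul_blk (p q : 'M[F]_(n + n, n)) a :
  row_mx p q *m blk a = row_mx q (p + q *m a).
Proof. by rewrite /blk mul_row_block !mulmx0 !mulmx1 add0r. Qed.

Lemma commute_step (p q p' q' : 'M[F]_(n + n, n)) (v : 'M[F]_(n + n))
    (a a' w0 w1 w : 'M[F]_n) :
  row_mx p' q' \in unitmx -> v *m p = p' *m w0 -> v *m q = q' *m w1 ->
  v *m (p + q *m a) = (p' + q' *m a') *m w <-> w = w0 /\ a' *m w = w1 *m a.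
Proof.
move=> Pu vp vq; split=> [vpq | [-> a'w]]; last first.
  by rewrite mulmxDr mulmxDl mulmxA vp vq -!mulmxA a'w.
have defect : row_mx p' q' *m col_mx (w0 - w) (w1 *m a - a' *m w) = 0.
  rewrite mul_row_col !mulmxBr !mulmxA -vp -vq addrACA -opprD -mulmxDl.
  by rewrite -mulmxA -mulmxDr vpq subrr.
move: (unitmx_mulmx_eq0 Pu defect); rewrite -col_mx0 => /eq_col_mx[].
by move=> /eqP; rewrite subr_eq0 => /eqP-> /eqP; rewrite subr_eq0 => /eqP->.
Qed.

End LinearAlgebra.

Section Diagram.
Variables (F : fieldType) (n m : nat) (A : nat -> 'M[F]_n).
Variable phi : nat -> 'M[F]_(n + n, n).
Hypotheses (m_gt0 : (0 < m)%N) (phiP : diag_data m A phi).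

(* The formal arc 0 is the column (1 ; 0), so that prefix A 0 = 1 splits as
   arc 0 (+) arc 1 like the other prefixes. *)
Definition arc k : 'M[F]_(n + n, n) := if k is 0 then col_mx 1%:M 0 else phi k.

Lemma arc1 : arc 1 = col_mx 0 1%:M.
Proof.
have : Defs.prefix A 1 = row_mx (phi 1) (phi 2) by apply: phiP; rewrite m_gt0.
by rewrite /= mul1mx /blk block_mxEh => /eq_row_mx[<-].
Qed.

Lemma prefix_arc k : (k <= m)%N -> Defs.prefix A k = row_mx (arc k) (arc k.+1).
Proof.
case: k => [_ | k km]; last by apply: phiP; rewrite km.
by rewrite arc1 /= -block_mxEh -scalar_mx_block.
Qed.

Lemma arc_pair_unitmx k : (k <= m)%N -> row_mx (arc k) (arc k.+1) \in unitmx.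
Proof. by move=> km; rewrite -prefix_arc ?prefix_unitmx. Qed.

Lemma arcSS k : (k < m)%N -> arc k.+2 = arc k + arc k.+1 *m A k.+1.
Proof.
move=> km; have := prefix_arc km; rewrite /= prefix_arc 1?ltnW // row_mx_mul_blk.
by case/eq_row_mx.
Qed.

End Diagram.

Section Morphisms.
Variables (F : fieldType) (n m : nat) (A A' : nat -> 'M[F]_n).
Variables phi phi' : nat -> 'M[F]_(n + n, n).
Hypotheses (m_gt0 : (0 < m)%N)
  (phiP : diag_data m A phi) (phi'P : diag_data m A' phi').

Definition alternating (u1 u2 : 'M[F]_n) k := if odd k then u1 else u2.

Lemma alternatingSS u1 u2 k : alternating u1 u2 k.+2 = alternating u1 u2 k.
Proof. by rewrite /alternating /= negbK. Qed.

Lemma solE u1 u2 : sol m A A' u1 u2 <-> forall k, (1 <= k <= m)%N ->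
  A' k *m alternating u1 u2 k.+1 = alternating u1 u2 k *m A k.
Proof. by split=> S k /S; rewrite /alternating /=; case: (odd k). Qed.

Lemma commute_arcSS (v : 'M[F]_(n + n)) w0 w1 w k : (k < m)%N ->
  v *m arc phi k = arc phi' k *m w0 -> v *m arc phi k.+1 = arc phi' k.+1 *m w1 ->
  v *m arc phi k.+2 = arc phi' k.+2 *m w <-> w = w0 /\ A' k.+1 *m w = w1 *m A k.+1.
Proof.
move=> km; rewrite (arcSS m_gt0 phiP) // (arcSS m_gt0 phi'P) //.
exact/commute_step/(arc_pair_unitmx m_gt0 phi'P (ltnW km)).
Qed.

Lemma diag_commute_arc0 u1 u2 :
  block_mx u2 0 0 u1 *m arc phi 0 = arc phi' 0 *m u2.
Proof.
by rewrite /arc mul_block_col mul_col_mx !mulmx0 mulmx1 !mul0mx mul1mx !addr0.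
Qed.

Lemma diag_commute_arc1 u1 u2 :
  block_mx u2 0 0 u1 *m arc phi 1 = arc phi' 1 *m u1.
Proof.
rewrite (arc1 m_gt0 phiP) (arc1 m_gt0 phi'P) mul_block_col mul_col_mx.
by rewrite !mulmx0 !mulmx1 !mul0mx mul1mx !add0r.
Qed.

Lemma sol_commute_arcs u1 u2 : sol m A A' u1 u2 -> forall k, (k <= m.+1)%N ->
  block_mx u2 0 0 u1 *m arc phi k = arc phi' k *m alternating u1 u2 k.
Proof.
move=> /solE S.
pose C k := block_mx u2 0 0 u1 *m arc phi k = arc phi' k *m alternating u1 u2 k.
suff CC k : (k <= m)%N -> C k /\ C k.+1.
  by case=> [|k km]; [case: (CC 0%N) | case: (CC k km)].
elim: k => [_ | k IHk km].
  by split; [apply: diag_commute_arc0 | apply: diag_commute_arc1].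
have [Ck Ck1] := IHk (ltnW km); split=> //; apply/(commute_arcSS _ km Ck Ck1).
by split; [rewrite alternatingSS | apply: S].
Qed.

Lemma diag_psi (u1 u2 : 'M[F]_n) : u1 *m psi F n = psi F n *m block_mx u2 0 0 u1.
Proof. by rewrite /psi mul_mx_row mul_row_block !mulmx0 !mul0mx mulmx1 mul1mx !add0r. Qed.

Lemma is_mor_diag u0 v (u : {ffun 'I_m.+1 -> 'M[F]_n}) :
  is_mor phi phi' u0 v u -> v = block_mx (ulsubmx v) 0 0 u0 /\ u ord0 = u0.
Proof.
case=> vpsi /(_ ord0); rewrite -[v]submxK in vpsi *.
move: vpsi; rewrite /psi mul_mx_row mul_row_block !mulmx0 !mul0mx mulmx1 !mul1mx !add0r.
case/eq_row_mx=> <- <-.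
have /= -> := arc1 m_gt0 phiP; have /= -> := arc1 m_gt0 phi'P.
rewrite mul_block_col mul_col_mx !mulmx0 !mulmx1 !mul0mx mul1mx !add0r.
by case/eq_col_mx=> -> ->; rewrite block_mxKul.
Qed.

Section CommutingArcs.
Variables (u1 u2 : 'M[F]_n) (U : nat -> 'M[F]_n).
Hypotheses (U0 : U 0 = u2) (U1 : U 1 = u1).
Hypothesis UP : forall k, (k <= m.+1)%N ->
  block_mx u2 0 0 u1 *m arc phi k = arc phi' k *m U k.

Lemma commute_arcs_alternating k : (k <= m.+1)%N -> U k = alternating u1 u2 k.
Proof.
suff UU j : (j <= m)%N -> U j = alternating u1 u2 j /\ U j.+1 = alternating u1 u2 j.+1.
  by case: k => [|k km]; [case: (UU 0%N) | case: (UU k km)].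
elim: j => [// | j IHj jm]; have [Uj Uj1] := IHj (ltnW jm); split=> //.
have [-> _] : U j.+2 = U j /\ A' j.+1 *m U j.+2 = U j.+1 *m A j.+1.
  by apply: (commute_arcSS _ jm (UP (k := j) _) (UP (k := j.+1) _)).1
           (UP (k := j.+2) _); lia.
by rewrite Uj alternatingSS.
Qed.

Lemma commute_arcs_sol : sol m A A' u1 u2.
Proof.
apply/solE => -[// | k] /andP[_ km].
have [_] : U k.+2 = U k /\ A' k.+1 *m U k.+2 = U k.+1 *m A k.+1.
  by apply: (commute_arcSS _ km (UP (k := k) _) (UP (k := k.+1) _)).1
           (UP (k := k.+2) _); lia.
by rewrite !commute_arcs_alternating //; lia.
Qed.

End CommutingArcs.
End Morphisms.

(* The invertibility of the continuants P_m(A) and P_m(A') is not needed: the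
   description of morphisms only uses the invertibility of the prefixes. *)
Theorem mainTheorem8 (F : fieldType) (n m : nat)
    (A A' : nat -> 'M[F]_n) (phi phi' : nat -> 'M[F]_(n + n, n)) :
  (0 < m)%N ->
  cont A m \in unitmx -> cont A' m \in unitmx ->
  diag_data m A phi -> diag_data m A' phi' ->
  (forall u1 u2, sol m A A' u1 u2 ->
     let: (u0, v, u) := mor_of m u1 u2 in is_mor phi phi' u0 v u) /\
  (forall u1 u2 w1 w2, sol m A A' u1 u2 -> sol m A A' w1 w2 ->
     mor_of m u1 u2 = mor_of m w1 w2 -> u1 = w1 /\ u2 = w2) /\
  (forall u0 v u, is_mor phi phi' u0 v u ->
     exists u1 u2, sol m A A' u1 u2 /\ (u0, v, u) = mor_of m u1 u2).
Proof.
move=> m_gt0 _ _ phiP phi'P; split; [|split].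
- move=> u1 u2 S; split=> [|i]; first exact: diag_psi.
  by rewrite ffunE; apply: (sol_commute_arcs m_gt0 phiP phi'P S (k := i.+1)).
- by move=> u1 u2 w1 w2 _ _ [-> /eq_block_mx[-> _ _ _]].
move=> u0 v u uP; have [vE u0E] := is_mor_diag m_gt0 phiP phi'P uP.
pose U k := if k is j.+1 then u (inord j) else ulsubmx v.
have U1 : U 1%N = u0 by rewrite /U -u0E; congr (u _); apply/val_inj/inordK.
have UP k : (k <= m.+1)%N ->
    block_mx (ulsubmx v) 0 0 u0 *m arc phi k = arc phi' k *m U k.
  case: k => [_ | k km]; first exact: diag_commute_arc0.
  by rewrite -vE /U /=; have := uP.2 (inord k); rewrite inordK.
exists u0, (ulsubmx v); split.
  exact: (commute_arcs_sol m_gt0 phiP phi'P _ U1 UP).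
rewrite /mor_of -vE; congr (_, _, _); apply/ffunP=> i; rewrite ffunE.
have := commute_arcs_alternating m_gt0 phiP phi'P _ U1 UP (k := i.+1).
by rewrite /U inord_val; apply.
Qed.
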